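(* Let $f:X\to\mathcal G$ be a convex function and $x_0\in\operatorname{dom} f$. Then $x_0$ solves the strict scalarized Stampacchia inequality, i.e. $$\forall x\in X,\ \forall z^*\in C^-\setminus\{0\}:\quad \varphi_{f,z^*}(x_0)=-\infty\ \text{ or }\ 0\le \varphi'_{f,z^*}(x_0,x-x_0),$$ if and only if $f(x_0)=\inf f[X]$.
   Context: $X$ is a real linear space and $Z$ a real locally convex Hausdorff space with topological dual $Z^*$. $C\subseteq Z$ is a closed convex cone with $0\in C$ such that $C^-=\{z^*\in Z^*: z^*(c)\le 0\ \forall c\in C\}$ satisfies $C^-\setminus\{0\}\ne\emptyset$. Let $\mathcal G=\{A\subseteq Z: A=\operatorname{cl}\operatorname{co}(A+C)\}$ (it contains $\emptyset$ and $Z$). For $A,B\in\mathcal G$: $A\oplus B=\operatorname{cl}\{a+b: a\in A,b\in B\}$, $tA=\{ta:a\in A\}$ for $t>0$. A function $f:X\to\mathcal G$ is convex if $f(tx_1+(1-t)x_2)\supseteq tf(x_1)\oplus(1-t)f(x_2)$ for all $x_1,x_2\in X$, $t\in(0,1)$; $\operatorname{dom} f=\{x: f(x)\neq\emptyset\}$; $\inf f[X]=\operatorname{cl}\operatorname{co}\bigcup_{x\in X}f(x)$. On $\overline{\mathbb R}=\mathbb R\cup\{\pm\infty\}$ use the inf-addition $\dot+$ (usual sum, with $r\dot+(+\infty)=+\infty$ for every $r$, in particular $(-\infty)\dot+(+\infty)=+\infty$) and the inf-residuation $r\ominus s=\inf\{t\in\mathbb R: r\le s\dot+ t\}$ (with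 $\inf\emptyset=+\infty$); $\frac1t(\pm\infty)=\pm\infty$ for $t>0$. For $z^*\in C^-\setminus\{0\}$, $\varphi_{f,z^*}(x)=\inf\{-z^*(z): z\in f(x)\}$ (equal to $+\infty$ if $f(x)=\emptyset$). For $\varphi:X\to\overline{\mathbb R}$, $\varphi'(x,u)=\inf_{t>0}\frac1t\big(\varphi(x+tu)\ominus\varphi(x)\big)$; $\varphi'_{f,z^*}$ denotes this derivative of $\varphi_{f,z^*}$. *)

From HB Require Import structures.
From mathcomp Require Import all_boot all_order all_algebra.
From mathcomp Require Import all_classical all_reals all_analysis.
Set Implicit Arguments. Unset Strict Implicit. Unset Printing Implicit Defensive.
Import Order.TTheory GRing.Theory Num.Theory.
Local Open Scope classical_set_scope.
Local Open Scope ring_scope.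

Section Defs.
Variable R : realType.

Section SetOps.
Variable Z : tvsType R.

Definition conv_hull (A : set Z) : set Z :=
  \bigcap_(B in [set B : set Z | convex_set (B : set (convex_lmodType Z)) /\ A `<=` B]) B.

Definition clco (A : set Z) : set Z := closure (conv_hull A).

Definition msum (A B : set Z) : set Z := [set a + b | a in A & b in B].

Definition oplus (A B : set Z) : set Z := closure (msum A B).

Definition sscale (t : R) (A : set Z) : set Z := [set t *: a | a in A].

Definition convex_cone (C : set Z) : Prop :=
  C 0 /\ (forall t c, 0 < t -> C c -> C (t *: c)) /\
  convex_set (C : set (convex_lmodType Z)).

Definition in_dual (zs : Z -> R) : Prop :=
  linear_for *%R zs /\ continuous (zs : Z -> R^o).

Definition neg_dual_cone (C : set Z) (zs : Z -> R) : Prop :=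
  in_dual zs /\ (forall c, C c -> zs c <= 0).

Definition in_G (C : set Z) (A : set Z) : Prop := A = clco (msum A C).
End SetOps.

Section Fun.
Variables (X : lmodType R) (Z : tvsType R) (C : set Z).

Definition G_convex (f : X -> set Z) : Prop :=
  forall x1 x2 (t : R), 0 < t < 1 ->
    oplus (sscale t (f x1)) (sscale (1 - t) (f x2)) `<=` f (t *: x1 + (1 - t) *: x2).

Definition dom (f : X -> set Z) : set X := [set x | f x != set0].

Definition inf_image (f : X -> set Z) : set Z := clco (\bigcup_(x in setT) f x).

Definition phi (f : X -> set Z) (zs : Z -> R) (x : X) : \bar R :=
  ereal_inf [set (- zs z)%:E | z in f x].
End Fun.

(* inf-addition on extended reals: +oo absorbing *)
Definition iadd (r s : \bar R) : \bar R :=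
  match r, s with
  | +oo%E, _ => +oo%E
  | _, +oo%E => +oo%E
  | -oo%E, _ => -oo%E
  | _, -oo%E => -oo%E
  | (a%:E)%E, (b%:E)%E => (a + b)%:E
  end.

Definition ires (r s : \bar R) : \bar R :=
  ereal_inf [set t%:E | t in [set t : R | (r <= iadd s t%:E)%E]].

Definition ddir (X : lmodType R) (g : X -> \bar R) (x u : X) : \bar R :=
  ereal_inf [set ((t^-1)%:E * ires (g (x + t *: u)%R) (g x))%E | t in [set t : R | 0 < t]].

End Defs.

(* If f x0 = inf f[X] then f x is contained in f x0 for every x, so each
   scalarization phi_{f,z*} is minimal at x0 and its directional derivatives
   there are nonnegative.  Conversely, when phi(x0) is finite, a nonnegative
   derivative in direction x - x0 gives phi(x0) <= phi at the midpoint of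
   [x0, x], and convexity of f then yields phi(x0) <= phi(x).  A point z of
   f x outside the closed convex set f x0 = cl co (f x0 + C) is separated from
   it by a continuous functional, which is nonpositive on C because f x0 is
   stable under adding C; for it phi(x) <= -z*(z) < phi(x0), a contradiction.
   Hence f x is contained in f x0 for all x, and one more separation gives
   inf f[X] = f x0.  Separation in the locally convex space Z comes from the
   Minkowski gauge of a convex neighbourhood and Hahn-Banach, proved with
   Zorn's lemma by minimizing sublinear functionals. *)

From Pilot Require Import Defs.
From HB Require Import structures.
From mathcomp Require Import all_boot all_order all_algebra.
From mathcomp Require Import all_classical all_reals all_analysis.
From mathcomp Require Import ring lra.
Import Order.TTheory GRing.Theory Num.Theory.
Local Open Scope classical_set_scope.
Local Open Scope ring_scope.

Set Implicit Arguments. Unset Strict Implicit.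

Lemma le_inf_add (R : realType) (A B : set R) c : A !=set0 -> B !=set0 ->
  (forall u v, A u -> B v -> c <= u + v) -> c <= inf A + inf B.
Proof.
move=> nA nB h.
have hB u : A u -> c - u <= inf B.
  by move=> Au; apply: lb_le_inf => // v Bv; have := h u v Au Bv; lra.
have : c - inf B <= inf A by apply: lb_le_inf => // u /hB; lra.
lra.
Qed.

Section HahnBanach.
Variables (R : realType) (E : lmodType R).

Definition sublinear (q : E -> R) :=
  (forall a b, q (a + b) <= q a + q b) /\ (forall s a, 0 < s -> q (s *: a) = s * q a).

Definition linear_functional (L : E -> R) :=
  (forall a b, L (a + b) = L a + L b) /\ (forall s a, L (s *: a) = s * L a).

Lemma sublinear0 q : sublinear q -> q 0 = 0.
Proof. by move=> [_ hZ]; have := hZ 2 0; rewrite scaler0 => /(_ (ltr0Sn _ 1)); lra. Qed.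

Lemma sublinearZ q s a : sublinear q -> 0 <= s -> q (s *: a) = s * q a.
Proof.
move=> hq; rewrite le_eqVlt => /orP[/eqP<-|s0]; last exact: hq.2.
by rewrite scale0r mul0r sublinear0.
Qed.

Lemma sublinear_oppr_le q a : sublinear q -> - q (- a) <= q a.
Proof. by move=> hq; have := hq.1 a (- a); rewrite subrr sublinear0 //; lra. Qed.

(* The one-dimensional step of Hahn-Banach: shrink q to a sublinear
   functional that is additive along x. *)
Definition lower_along (q : E -> R) (x y : E) :=
  inf [set q (y + t *: x) - t * q x | t in [set t : R | 0 <= t]].

Section LowerAlong.
Variables (q : E -> R) (x : E).
Hypothesis hq : sublinear q.

Let lower_along_set_ne y :
  [set q (y + t *: x) - t * q x | t in [set t : R | 0 <= t]] !=set0.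
Proof. by exists (q (y + 0 *: x) - 0 * q x); exists 0 => /=. Qed.

Let lower_along_set_lb y :
  has_lbound [set q (y + t *: x) - t * q x | t in [set t : R | 0 <= t]].
Proof.
exists (- q (- y)) => _ [t t0 <-]; rewrite -(sublinearZ _ hq t0).
by have := hq.1 (y + t *: x) (- y); rewrite addrC addKr; lra.
Qed.

Lemma lower_along_le y t : 0 <= t -> lower_along q x y <= q (y + t *: x) - t * q x.
Proof. by move=> t0; apply: ge_inf; [exact: lower_along_set_lb|exists t]. Qed.

Lemma lower_along_le_self y : lower_along q x y <= q y.
Proof. by have := lower_along_le y (lexx 0); rewrite scale0r addr0 mul0r subr0. Qed.

Lemma lower_along_oppr : lower_along q x (- x) <= - q x.
Proof.
by have := lower_along_le (- x) ler01; rewrite scale1r addNr sublinear0 // mul1r; lra.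
Qed.

Lemma lower_along_sublinear : sublinear (lower_along q x).
Proof.
split.
- move=> a b; apply: le_inf_add => // _ _ [s s0 <-] [t t0 <-].
  apply: (le_trans (lower_along_le (a + b) (addr_ge0 s0 t0))).
  rewrite (_ : a + b + (s + t) *: x = (a + s *: x) + (b + t *: x)).
    by have := hq.1 (a + s *: x) (b + t *: x); lra.
  by rewrite scalerDl addrACA.
- move=> s a s0; apply/eqP; rewrite eq_le; apply/andP; split.
  + rewrite -ler_pdivrMl //; apply: lb_le_inf => // _ [t t0 <-].
    rewrite ler_pdivrMl //.
    apply: (le_trans (lower_along_le _ (mulr_ge0 (ltW s0) t0))).
    by rewrite -scalerA -scalerDr hq.2 // mulrBr mulrA; lra.
  + apply: lb_le_inf => // _ [t t0 <-].
    have st0 : 0 <= s^-1 * t by rewrite mulr_ge0 // invr_ge0 ltW.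
    have := lower_along_le a st0; rewrite -(ler_pM2l s0) => /le_trans; apply.
    have -> : s *: a + t *: x = s *: (a + (s^-1 * t) *: x).
      by rewrite scalerDr scalerA mulrA divff ?gt_eqF // mul1r.
    by rewrite hq.2 // mulrBr !mulrA divff ?gt_eqF // mul1r.
Qed.

End LowerAlong.

Lemma minimal_sublinear_linear q : sublinear q ->
  (forall x y, q y <= lower_along q x y) -> linear_functional q.
Proof.
move=> hq qmin.
have qD a b : q (a + b) = q a + q b.
  apply/eqP; rewrite eq_le hq.1 /=.
  have := le_trans (qmin a b) (@lower_along_le q a hq b 1 ler01).
  by rewrite scale1r mul1r [b + a]addrC; lra.
have qN a : q (- a) = - q a by have := qD a (- a); rewrite subrr sublinear0 //; lra.
split=> // s a; have [s0|s0|->] := ltgtP s 0; last by rewrite scale0r mul0r sublinear0.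
- rewrite -[s]opprK scaleNr qN hq.2 ?oppr_gt0 // .
  by rewrite mulNr !opprK.
- exact: hq.2 s0.
Qed.

Section Zorn.
Variables (p : E -> R) (x0 : E).
Hypothesis hp : sublinear p.

Definition hb_admissible (q : E -> R) :=
  [/\ sublinear q, forall y, q y <= p y & q (- x0) <= - p x0].

Lemma hb_admissible_lower_along q x : hb_admissible q -> hb_admissible (lower_along q x).
Proof.
move=> [hq qp qx]; split; first exact: lower_along_sublinear.
- by move=> y; exact: le_trans (lower_along_le_self _ hq _) (qp y).
- exact: le_trans (lower_along_le_self _ hq _) qx.
Qed.

Lemma hb_admissible_chain_inf (A : set (E -> R)) : A !=set0 -> A `<=` hb_admissible ->
  (forall a b, A a -> A b -> (forall y, a y <= b y) \/ (forall y, b y <= a y)) ->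
  exists2 r, hb_admissible r & forall a, A a -> forall y, r y <= a y.
Proof.
move=> [a0 Aa0] AS tot.
pose r y := inf [set a y | a in A].
have ne y : [set a y | a in A] !=set0 by exists (a0 y); exists a0.
have lb y : has_lbound [set a y | a in A].
  exists (- p (- y)) => _ [a /AS [ha ap _] <-].
  by apply: le_trans (sublinear_oppr_le _ ha); rewrite lerN2.
have rle a y : A a -> r y <= a y by move=> Aa; apply: ge_inf => //; exists a.
have rsub : sublinear r.
  split.
  - move=> a b; apply: le_inf_add => // _ _ [q1 A1 <-] [q2 A2 <-].
    have [[h1 _] _ _] := AS q1 A1; have [[h2 _] _ _] := AS q2 A2.
    case: (tot q1 q2 A1 A2) => h.
    + by apply: le_trans (rle q1 _ A1) (le_trans (h1 a b) _); rewrite lerD2l.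
    + by apply: le_trans (rle q2 _ A2) (le_trans (h2 a b) _); rewrite lerD2r.
  - move=> s a s0; apply/eqP; rewrite eq_le; apply/andP; split.
    + rewrite -ler_pdivrMl //; apply: lb_le_inf => // _ [q Aq <-].
      have [hq _ _] := AS q Aq.
      by rewrite ler_pdivrMl // -hq.2 //; exact: rle.
    + apply: lb_le_inf => // _ [q Aq <-]; have [hq _ _] := AS q Aq.
      by rewrite hq.2 // ler_pM2l //; exact: rle.
have [_ a0p a0x] := AS a0 Aa0.
exists r; last by move=> a Aa y; exact: rle.
split => //; first by move=> y; exact: le_trans (rle a0 y Aa0) (a0p y).
exact: le_trans (rle a0 _ Aa0) a0x.
Qed.

Theorem hahn_banach_point : exists L : E -> R,
  [/\ linear_functional L, forall y, L y <= p y & p x0 <= L x0].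
Proof.
pose T := {q : E -> R | hb_admissible q}.
have S0 : hb_admissible (lower_along p x0).
  split; first exact: lower_along_sublinear.
  - by move=> y; exact: lower_along_le_self.
  - exact: lower_along_oppr.
pose below (a b : T) := `[< forall y, sval b y <= sval a y >].
have [//| | | [q Sq] qmax] := @ZL_preorder T (exist _ _ S0) below.
- by move=> a; apply/asboolP => y.
- move=> a b c /asboolP hab /asboolP hbc; apply/asboolP => y.
  exact: le_trans (hbc y) (hab y).
- move=> A totA.
  have [[a Aa]|nA] := pselect (A !=set0); last first.
    by exists (exist _ _ S0) => s As; exfalso; apply: nA; exists s.
  have [|_ [b _ <-]|_ _ [b Ab <-] [c Ac <-]|r Sr rle] :=
    @hb_admissible_chain_inf (sval @` A).
  + by exists (sval a); exists a.
  + exact: svalP b.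
  + by case: (totA b c Ab Ac) => /asboolP h; [right|left].
  exists (exist _ r Sr) => b Ab; apply/asboolP => y /=.
  by apply: rle; exists b.
have [hq qp qx] := Sq.
have qlin : linear_functional q.
  apply: minimal_sublinear_linear => // x.
  have Sx := hb_admissible_lower_along x Sq.
  apply/asboolP/(qmax (exist _ _ Sx)); apply/asboolP => y /=.
  exact: lower_along_le_self.
exists q; split => //.
by move: qx; rewrite -scaleN1r qlin.2 mulN1r lerN2.
Qed.

End Zorn.
End HahnBanach.

Section Separation.
Variables (R : realType) (Z : tvsType R).

Definition cvx (U : set Z) := forall a b l, 0 <= l -> l <= 1 -> U a -> U b ->
  U (l *: a + (1 - l) *: b).

Lemma cvx_convex_set (V : set Z) : convex_set (V : set (convex_lmodType Z)) -> cvx V.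
Proof.
move=> cV a b l l0 l1 Va Vb.
exact/set_mem/(cV a b (Itv01 l0 l1) (mem_set Va) (mem_set Vb)).
Qed.

Lemma convex_combD (l : R) (p q p' q' : Z) :
  l *: (p + q) + (1 - l) *: (p' + q') = (l *: p + (1 - l) *: p') + (l *: q + (1 - l) *: q').
Proof. by rewrite !scalerDr addrACA. Qed.

Lemma convex_comb_id (l : R) (q : Z) : l *: q + (1 - l) *: q = q.
Proof. by rewrite -scalerDl addrC subrK scale1r. Qed.

Lemma continuous_affine (a : Z) (k : R) : continuous (fun v : Z => a + k *: v).
Proof.
move=> v.
have kv : {for v, continuous (fun v : Z => ((k : R^o), v))}.
  by apply: (@cvg_pair _ _ _ _ (nbhs (k : R^o))); [exact: cvg_cst|exact: cvg_id].
have akv : {for v, continuous (fun v : Z => (a, k *: v))}.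
  apply: (@cvg_pair _ _ _ _ (nbhs a)); first exact: cvg_cst.
  exact: continuous_comp kv (scale_continuous ((k : R^o), v)).
exact: continuous_comp akv (add_continuous (a, k *: v)).
Qed.

Lemma nbhs0_absorbing (W : set Z) : nbhs 0 W -> forall y, exists2 t, 0 < t & W (t *: y).
Proof.
move=> W0 y.
have ty : continuous (fun t : R^o => t *: y).
  move=> t; have ty : {for t, continuous (fun t : R^o => (t, y))}.
    by apply: (@cvg_pair _ _ _ _ (nbhs t) (nbhs y)); [exact: cvg_id|exact: cvg_cst].
  exact: continuous_comp ty (scale_continuous (t, y)).
have /nbhs_ballP[e /= e0 eW] : nbhs (0 : R^o) [set t : R^o | W (t *: y)].
  by apply: ty; rewrite scale0r.
exists (e / 2); first by lra.
by apply: eW; rewrite /ball /= sub0r normrN gtr0_norm; lra.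
Qed.

Lemma linear_functional_continuous (L : Z -> R) (W : set Z) :
  linear_functional L -> nbhs 0 W -> (forall w, W w -> `|L w| <= 1) ->
  continuous (L : Z -> R^o).
Proof.
move=> [LD LZ] W0 LW y; apply/cvgrPdist_lt => e e0.
pose k := 2 / e.
have ke : k * e = 2 by rewrite /k divfK // gt_eqF.
have : nbhs y [set v | W (- (k *: y) + k *: v)].
  by apply: continuous_affine; rewrite addNr.
apply: filterS => v /LW; rewrite LD LZ -scaleNr LZ ler_norml => /andP[h1 h2].
rewrite ltr_norml; apply/andP; split; nra.
Qed.

Section Gauge.
Variable U : set Z.
Hypotheses (cU : cvx U) (U0 : U 0)
  (Uabs : forall y, exists2 l, 0 < l & U (l^-1 *: y)).

Definition gauge y := inf [set l | 0 < l /\ U (l^-1 *: y)].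

Let gauge_set_ne y : [set l | 0 < l /\ U (l^-1 *: y)] !=set0.
Proof. by have [l l0 Ul] := Uabs y; exists l. Qed.

Let gauge_set_lb y : has_lbound [set l | 0 < l /\ U (l^-1 *: y)].
Proof. by exists 0 => l [l0 _]; exact: ltW. Qed.

Lemma gauge_le y l : 0 < l -> U (l^-1 *: y) -> gauge y <= l.
Proof. by move=> l0 Ul; apply: ge_inf. Qed.

Lemma gauge_le1 y : U y -> gauge y <= 1.
Proof. by move=> Uy; apply: gauge_le => //; rewrite invr1 scale1r. Qed.

Lemma gauge_lt1 y : gauge y < 1 -> U y.
Proof.
move=> /(inf_lt (gauge_set_ne y)) [l [l0 Ul] l1].
have l0' : 0 <= l by exact: ltW.
by have := cU l0' (ltW l1) Ul U0; rewrite scaler0 addr0 scalerA divff ?gt_eqF // scale1r.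
Qed.

Lemma gauge_sublinear : sublinear gauge.
Proof.
split.
- move=> a b; apply: le_inf_add => // l m [l0 Ul] [m0 Um].
  have lm0 : 0 < l + m by exact: addr_gt0.
  apply: gauge_le => //.
  have q0 : 0 <= l / (l + m) by rewrite divr_ge0 // ltW.
  have q1 : l / (l + m) <= 1 by rewrite ler_pdivrMr // mul1r lerDl ltW.
  suff <- : l / (l + m) *: (l^-1 *: a) + (1 - l / (l + m)) *: (m^-1 *: b) =
            (l + m)^-1 *: (a + b) by exact: cU.
  by rewrite !scalerA scalerDr; congr (_ *: _ + _ *: _); field; rewrite ?gt_eqF.
- move=> s a s0; apply/eqP; rewrite eq_le; apply/andP; split.
  + rewrite -ler_pdivrMl //; apply: lb_le_inf => // l [l0 Ul].
    rewrite ler_pdivrMl //; apply: gauge_le; first exact: mulr_gt0.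
    by rewrite scalerA invfM mulrAC mulVf ?gt_eqF // mul1r.
  + apply: lb_le_inf => // m [m0 Um]; rewrite -ler_pdivlMl // mulrC.
    apply: gauge_le; first by rewrite divr_gt0.
    by move: Um; rewrite scalerA invfM invrK mulrC.
Qed.

End Gauge.

Definition sym_part (V : set Z) (z : Z) := [set w | V (z + w) /\ V (z - w)].

Lemma sym_part_cvx V z : cvx V -> cvx (sym_part V z).
Proof.
move=> cV a b l l0 l1 [Va1 Va2] [Vb1 Vb2]; split.
- by have := cV _ _ _ l0 l1 Va1 Vb1; rewrite convex_combD convex_comb_id.
- have := cV _ _ _ l0 l1 Va2 Vb2; rewrite convex_combD convex_comb_id.
  by rewrite opprD -!scalerN.
Qed.

Lemma sym_part_nbhs V z : nbhs z V -> nbhs 0 (sym_part V z).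
Proof.
move=> zV; apply: filterI.
- have : nbhs (0 : Z) [set w | V (z + 1 *: w)].
    by apply: continuous_affine; rewrite scaler0 addr0.
  by apply: filterS => w /=; rewrite scale1r.
- have : nbhs (0 : Z) [set w | V (z + (-1) *: w)].
    by apply: continuous_affine; rewrite scaler0 addr0.
  by apply: filterS => w /=; rewrite scaleN1r.
Qed.

(* The gauge of [D + W - d0], for a symmetric convex neighbourhood [W] of 0 with
   [z - W] disjoint from [D], is dominated by a linear functional [L] with
   [1 <= L (z - d0)]; [|L| <= 1] on [W] makes it continuous. *)
Theorem separation (D : set Z) (z d0 : Z) : cvx D -> D d0 -> ~ closure D z ->
  exists L : Z -> R, [/\ linear_functional L, continuous (L : Z -> R^o) &
    exists2 c, c < L z & forall d, D d -> L d <= c].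
Proof.
move=> cD Dd0 /existsNP[N /not_implyP[zN DN]].
have [B Bcvx [Bopen Bbase]] := @locally_convex R Z.
have [V [BV Vz] VN] := Bbase z N zN.
have cV : cvx V by apply: cvx_convex_set; apply: Bcvx; exact: mem_set.
pose W := sym_part V z.
have W0 : nbhs 0 W by apply: sym_part_nbhs; apply: open_nbhs_nbhs; split=> //; exact: Bopen.
pose U := [set u | exists d w, [/\ D d, W w & u = d + w - d0]].
have WU w : W w -> U w by move=> Ww; exists d0, w; split=> //; rewrite addrC addKr.
have cU : cvx U.
  move=> a b l l0 l1 [d1 [w1 [D1 W1 ->]]] [d2 [w2 [D2 W2 ->]]].
  exists (l *: d1 + (1 - l) *: d2), (l *: w1 + (1 - l) *: w2); split.
  - exact: cD.
  - exact: sym_part_cvx.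
  - by rewrite convex_combD convex_comb_id convex_combD.
have U0 : U 0 by apply: WU; exact: nbhs_singleton.
have Uabs y : exists2 l, 0 < l & U (l^-1 *: y).
  have [t t0 Wt] := nbhs0_absorbing W0 y.
  by exists t^-1; rewrite ?invr_gt0 // invrK; exact: WU.
have zU : ~ U (z - d0).
  move=> [d [w [Dd [_ Vw] /eqP]]]; rewrite subr_eq subrK => /eqP zdw.
  by apply: DN; exists d; split => //; apply: VN; rewrite (_ : d = z - w) // zdw addrK.
have [L [Llin Lgauge Lz]] := hahn_banach_point (z - d0) (gauge_sublinear cU Uabs).
have LU u : U u -> L u <= 1 by move=> Uu; exact: le_trans (Lgauge u) (gauge_le1 Uu).
have LN a : L (- a) = - L a by rewrite -scaleN1r Llin.2 mulN1r.
have {}Lz : 1 <= L (z - d0).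
  rewrite leNgt; apply/negP => Lz1; apply: zU; apply: gauge_lt1 => //.
  exact: le_lt_trans Lz Lz1.
exists L; split => //.
  apply: linear_functional_continuous Llin W0 _ => w Ww.
  rewrite ler_norml -lerNl -LN !LU //; first exact: WU.
  by apply: WU; case: Ww => Vw1 Vw2; split; rewrite ?opprK.
have [t t0 Wt] := nbhs0_absorbing W0 (z - d0).
exists (1 + L d0 - t).
  by rewrite -(subrK d0 z) Llin.1; lra.
move=> d Dd; have : U (d + t *: (z - d0) - d0) by exists d, (t *: (z - d0)).
move/LU; rewrite !Llin.1 LN Llin.2.
have : t <= t * L (z - d0) by rewrite ler_pMr.
lra.
Qed.

End Separation.

Section HullClosure.
Variables (R : realType) (Z : tvsType R).

Lemma conv_hull_sub (A : set Z) : A `<=` conv_hull A.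
Proof. by move=> a Aa B [_ AB]; exact: AB. Qed.

Lemma conv_hull_cvx (A : set Z) : cvx (conv_hull A).
Proof.
move=> a b l l0 l1 ha hb B [cB AB].
exact: (cvx_convex_set cB) (ha B (conj cB AB)) (hb B (conj cB AB)).
Qed.

Lemma conv_hull_min (A B : set Z) : cvx B -> A `<=` B -> conv_hull A `<=` B.
Proof.
move=> cB AB y; apply; split => // a b l /set_mem Ba /set_mem Bb.
exact/mem_set/(cB a b l%:num (ge0 l) (le1 l) Ba Bb).
Qed.

Lemma closure_le (L : Z -> R) (H : set Z) c : continuous (L : Z -> R^o) ->
  (forall h, H h -> L h <= c) -> forall y, closure H y -> L y <= c.
Proof.
move=> Lc HL y Hy; rewrite leNgt; apply/negP => cLy.
have /cvgrPdist_lt/(_ (L y - c)) := Lc y; rewrite subr_gt0 => /(_ cLy) yN.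
have [h [Hh /= Lyh]] := Hy _ yN.
by have := HL h Hh; have := ler_norm (L y - L h); lra.
Qed.

Lemma clco_le (L : Z -> R) (A : set Z) c :
  linear_functional L -> continuous (L : Z -> R^o) ->
  (forall a, A a -> L a <= c) -> forall y, clco A y -> L y <= c.
Proof.
move=> [LD LZ] Lc AL; apply: closure_le => // h.
apply: (conv_hull_min (B := [set h | L h <= c])) => // a b l l0 l1 /= La Lb.
by rewrite LD !LZ; nra.
Qed.

(* A functional separating [y] from a set [A = cl co (A + C)] is bounded above
   on [A + C], hence nonpositive on the cone [C]. *)
Lemma G_separation (C A : set Z) (a0 y : Z) : convex_cone C -> in_G C A -> A a0 -> ~ A y ->
  exists L : Z -> R, exists2 c, neg_dual_cone C L /\ L != (fun=> 0) &
    [/\ linear_functional L, c < L y & forall a, A a -> L a <= c].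
Proof.
move=> [C0 [CZ _]] AG Aa0 Ay.
pose D := conv_hull (Defs.msum A C).
have AC a c0 : A a -> C c0 -> D (a + c0).
  by move=> Aa Cc0; apply: conv_hull_sub; exists a => //; exists c0.
have AD : A = closure D by rewrite {1}AG.
have Dy : ~ closure D y by rewrite -AD.
have [L [Llin Lc [c Ly LD]]] :=
  separation (conv_hull_cvx (A := Defs.msum A C)) (AC a0 0 Aa0 C0) Dy.
have LA a : A a -> L a <= c by rewrite AD; exact: closure_le.
exists L, c; last by split.
split; last by apply/eqP => L0; have := LA a0 Aa0; move: Ly; rewrite L0 /=; lra.
split; first by split=> // s u v; rewrite Llin.1 Llin.2.
move=> c0 Cc0; rewrite leNgt; apply/negP => Lc0.
pose s := (`|c - L a0| + 1) / L c0.
have s0 : 0 < s by rewrite divr_gt0 // ltr_pwDr // normr_ge0.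
have := LD _ (AC _ _ Aa0 (CZ _ _ s0 Cc0)).
rewrite Llin.1 Llin.2 /s divfK ?gt_eqF //.
by have := ler_norm (c - L a0); lra.
Qed.

End HullClosure.

Section Scalarization.
Variables (R : realType) (X : lmodType R).
Local Open Scope ereal_scope.

Lemma ires_ge0P (s : \bar R) (r : R) : 0 <= ires s r%:E <-> r%:E <= s.
Proof.
split=> [|rs]; last first.
  apply/ereal_infP => _ [t /= st <-]; rewrite lee_fin.
  by have := le_trans rs st; rewrite lee_fin; lra.
apply: contraPP => /negP; rewrite -ltNge => sr.
have [t t0 st] : exists2 t : R, (t < 0)%R & s <= (r + t)%:E.
  case: s sr => [q| |] //= qr; last by exists (-1)%R; [lra|exact: leNye].
  by exists (q - r)%R; rewrite ?lee_fin; move: qr; rewrite lte_fin; lra.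
apply/negP; rewrite -ltNge; apply: (@le_lt_trans _ _ t%:E); last by rewrite lte_fin.
by apply: ereal_inf_lbound; exists t.
Qed.

Lemma ddir_ge0P (g : X -> \bar R) (x u : X) (r : R) : g x = r%:E ->
  0 <= ddir g x u <-> forall t : R, (0 < t)%R -> r%:E <= g (x + t *: u)%R.
Proof.
move=> gx; split=> [ddir0 t t0|gmin].
  apply/ires_ge0P; rewrite -gx -(@pmule_rge0 _ (t^-1)%:E) ?lte_fin ?invr_gt0 //.
  by apply: le_trans ddir0 _; apply: ereal_inf_lbound; exists t.
apply/ereal_infP => _ [t t0 <-].
apply: mule_ge0; first by rewrite lee_fin invr_ge0 ltW.
by rewrite gx; apply/ires_ge0P; exact: gmin.
Qed.

Variable Z : tvsType R.
Implicit Types (f : X -> set Z) (zs : Z -> R).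

Lemma phi_le_subset f zs x y : f y `<=` f x -> phi f zs x <= phi f zs y.
Proof. by move=> fyx; apply: ereal_inf_le_tmp; exact: image_subset. Qed.

Lemma phi_le f zs x z : f x z -> phi f zs x <= (- zs z)%:E.
Proof. by move=> fxz; apply: ereal_inf_lbound; exists z. Qed.

Lemma phi_fin f zs x a c : f x a -> (forall z, f x z -> (zs z <= c)%R) ->
  exists2 r, phi f zs x = r%:E & (- c <= r)%R.
Proof.
move=> fxa zsc; have : (- c)%:E <= phi f zs x.
  by apply/ereal_infP => _ [z fxz <-]; rewrite lee_fin lerN2; exact: zsc.
by move: (phi_le zs fxa); case: (phi f zs x) => [r| |] // _ cr; exists r.
Qed.

Lemma phi_le_convex_comb f zs (t : R) x1 x2 z1 z2 : G_convex f ->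
  linear_functional zs -> (0 < t < 1)%R -> f x1 z1 -> f x2 z2 ->
  phi f zs (t *: x1 + (1 - t) *: x2) <= (- (t * zs z1 + (1 - t) * zs z2))%:E.
Proof.
move=> fconv [zsD zsZ] t01 fz1 fz2; rewrite -!zsZ -zsD; apply: phi_le.
apply: fconv => //; apply: subset_closure.
by exists (t *: z1); [exists z1|exists ((1 - t) *: z2) => //; exists z2].
Qed.

(* A nonnegative derivative bounds phi x0 by phi at the midpoint of [x0, x],
   which convexity bounds by the average of phi x0 and phi x. *)
Lemma phi_le_of_ddir_ge0 f zs x0 x (r : R) : G_convex f -> linear_functional zs ->
  phi f zs x0 = r%:E -> 0 <= ddir (phi f zs) x0 (x - x0) -> r%:E <= phi f zs x.
Proof.
move=> fconv zslin phir /(ddir_ge0P _ phir)/(_ 2^-1%R) mid.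
have half0 : (0 < (2^-1 : R))%R by lra.
have half : (0 < (2^-1 : R) < 1)%R by rewrite half0 /=; lra.
have xmid : (x0 + 2^-1 *: (x - x0) = 2^-1 *: x + (1 - 2^-1) *: x0)%R.
  by rewrite scalerBr scalerBl scale1r addrCA addrC.
apply/ereal_infP => _ [z fxz <-].
have key a : f x0 a -> ((2 * r + zs z)%:E <= (- zs a)%:E).
  move=> fx0a; have := phi_le_convex_comb fconv zslin half fxz fx0a.
  rewrite -xmid => /(le_trans (mid half0)); rewrite !lee_fin; lra.
have : (2 * r + zs z)%:E <= phi f zs x0.
  by apply/ereal_infP => _ [a fx0a <-]; exact: key.
by rewrite phir !lee_fin; lra.
Qed.

End Scalarization.

Unset Implicit Arguments. Set Strict Implicit.

Theorem mainTheorem1 (R : realType) (X : lmodType R) (Z : tvsType R)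
  (C : set Z)
  (hZ : hausdorff_space Z)
  (hCcl : closed C) (hCcone : convex_cone C)
  (hCneg : exists zs : Z -> R, neg_dual_cone C zs /\ zs != (fun=> 0))
  (f : X -> set Z) (hfG : forall x, in_G C (f x))
  (hf : G_convex f) (x0 : X) (hx0 : dom f x0) :
  (forall (x : X) (zs : Z -> R), neg_dual_cone C zs -> zs != (fun=> 0) ->
     phi f zs x0 = -oo%E \/ (0 <= ddir (phi f zs) x0 (x - x0))%E)
  <-> f x0 = inf_image f.
Proof.
have [a0 fx0a0] : exists a, f x0 a by apply/set0P.
have fx0_inf : f x0 `<=` inf_image f.
  by move=> a fx0a; apply: subset_closure; apply: conv_hull_sub; exists x0.
split=> [stampacchia | fx0E x zs _ _]; last first.
  have phi_min y : (phi f zs x0 <= phi f zs y)%E.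
    apply: phi_le_subset => z fyz; rewrite fx0E.
    by apply: subset_closure; apply: conv_hull_sub; exists y.
  have := phi_le zs fx0a0; case phir: (phi f zs x0) => [r| |] // _; last by left.
  by right; apply/(ddir_ge0P _ phir) => t _; rewrite -phir; exact: phi_min.
have fx_sub x : f x `<=` f x0.
  move=> y fxy; apply: contrapT => fx0y.
  have [L [c [LC L0] [Llin Ly Lc]]] := G_separation hCcone (hfG x0) fx0a0 fx0y.
  have [r phir cr] := phi_fin fx0a0 Lc.
  case: (stampacchia x L LC L0) => [|/(phi_le_of_ddir_ge0 hf Llin phir)]; first by rewrite phir.
  by move/le_trans/(_ (phi_le L fxy)); rewrite lee_fin; lra.
apply/seteqP; split => // y yinf; apply: contrapT => fx0y.
have [L [c [[Ldual _] _] [Llin Ly Lc]]] := G_separation hCcone (hfG x0) fx0a0 fx0y.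
have Lcup a : (\bigcup_(x in setT) f x) a -> L a <= c by move=> [x _ /fx_sub/Lc].
by have := clco_le Llin Ldual.2 Lcup yinf; lra.
Qed.
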